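(* For every positive integer $R$, $$\frac{1}{\#\{\mathbf{x}\in\mathbb{Z}^2:\|\mathbf{x}\|_E\le R\}}\sum_{\substack{\mathbf{x}\in\mathbb{Z}^2\\ \|\mathbf{x}\|_E\le R}}\operatorname{length}(o(\mathbf{x}))=\frac{8}{3\pi}\big(\sqrt2+2\sqrt5\big)R+O(1).$$ The implied constant is absolute.
   Context: Define $\mathcal K_1,\mathcal K_2:\mathbb{Z}^2\to\mathbb{Z}^2$ by $\mathcal K_1(x_1,x_2)=(-x_1+x_2,x_2)$ and $\mathcal K_2(x_1,x_2)=(x_1,x_1-x_2)$. The orbit $o(\mathbf{x})$ of $\mathbf{x}=(x_1,x_2)$ under repeated application of $\mathcal K_1,\mathcal K_2$ is traversed as the closed path $P_1\to P_2\to\cdots\to P_6\to P_1$, where $P_1=(x_1,x_2)$, $P_2=(-x_1+x_2,x_2)$, $P_3=(-x_1+x_2,-x_1)$, $P_4=(-x_2,-x_1)$, $P_5=(-x_2,x_1-x_2)$, $P_6=(x_1,x_1-x_2)$. Consecutive points differ by an application of $\mathcal K_1$ or $\mathcal K_2$. The length (perimeter) of the orbit is the total Euclidean length of this closed path: $$\operatorname{length}(o(\mathbf{x}))=2\big(|2x_1-x_2|+|x_1+x_2|+|2x_2-x_1|\big).$$ This quantity depends only on the orbit. $\|\cdot\|_E$ is the Euclidean norm. *)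

From Stdlib Require Import Reals ZArith List.
Import ListNotations.
Open Scope R_scope.

Definition K1 (x : Z * Z) : Z * Z := ((- fst x + snd x)%Z, snd x).
Definition K2 (x : Z * Z) : Z * Z := (fst x, (fst x - snd x)%Z).

Definition distE (p q : Z * Z) : R :=
  sqrt ((IZR (fst p) - IZR (fst q)) ^ 2 + (IZR (snd p) - IZR (snd q)) ^ 2).

(* The closed path P1 -> P2 -> ... -> P6 -> P1 traversing the orbit of x. *)
Definition orbit_path (x : Z * Z) : list (Z * Z) :=
  let x1 := fst x in let x2 := snd x in
  [ (x1, x2);
    ((- x1 + x2)%Z, x2);
    ((- x1 + x2)%Z, (- x1)%Z);
    ((- x2)%Z, (- x1)%Z);
    ((- x2)%Z, (x1 - x2)%Z);
    (x1, (x1 - x2)%Z) ].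

Fixpoint open_length (p : Z * Z) (l : list (Z * Z)) : R :=
  match l with
  | [] => 0
  | q :: l' => distE p q + open_length q l'
  end.

Definition closed_length (l : list (Z * Z)) : R :=
  match l with
  | [] => 0
  | p :: l' => open_length p (l' ++ [p])
  end.

Definition orbit_length (x : Z * Z) : R := closed_length (orbit_path x).

Definition coord_range (n : nat) : list Z :=
  map (fun i => (Z.of_nat i - Z.of_nat n)%Z) (seq 0 (2 * n + 1)).

Definition disk_points (n : nat) : list (Z * Z) :=
  filter (fun x => Z.leb (fst x * fst x + snd x * snd x) (Z.of_nat n * Z.of_nat n))
         (list_prod (coord_range n) (coord_range n)).

Definition sum_list (l : list R) : R := fold_right Rplus 0 l.

Definition avg_orbit_length (n : nat) : R :=
  sum_list (map orbit_length (disk_points n)) / INR (length (disk_points n)).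

(** The orbit length of [(a, b)] is [2 (|2a - b| + |a + b| + |a - 2b|)], so after the
    swap [(a, b) -> (b, a)] the disk sum of orbit lengths is [2 (4 X + Y)], where [X] and
    [Y] are the disk sums of [|g a + b|] for [g = -1/2] and [g = 1].  Summing by columns,
    the lattice points of a column approximate the integral of [|g a + s|] along the
    chord with error [O(n)]; these column integrals are nonincreasing in [|a|], hence
    their sum is their integral [4/3 sqrt (1 + g^2) n^3] up to [O(n^2)].  The same
    comparison counts [pi n^2 + O(n)] lattice points in the disk, and the quotient is
    [8 / (3 pi) (sqrt 2 + 2 sqrt 5) n + O(1)]. *)

From Coquelicot Require Import Coquelicot.
From Stdlib Require Import Reals ZArith List Lra Lia Psatz.
Open Scope R_scope.

Fixpoint zsum (f : Z -> R) (a : Z) (len : nat) : R :=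
  match len with O => 0 | S l => f a + zsum f (a + 1)%Z l end.

Lemma zsum_ext f g a len :
  (forall i, (a <= i < a + Z.of_nat len)%Z -> f i = g i) -> zsum f a len = zsum g a len.
Proof.
  revert a; induction len as [|l IH]; intros a H; simpl; auto.
  rewrite (H a), (IH (a + 1)%Z); auto; [intros i Hi; apply H|]; lia.
Qed.

Lemma zsum_add f g a len : zsum (fun i => f i + g i) a len = zsum f a len + zsum g a len.
Proof. revert a; induction len; intros a; simpl; [lra | rewrite IHlen; lra]. Qed.

Lemma zsum_scal c f a len : zsum (fun i => c * f i) a len = c * zsum f a len.
Proof. revert a; induction len; intros a; simpl; [lra | rewrite IHlen; lra]. Qed.

Lemma zsum_const c a len : zsum (fun _ => c) a len = INR len * c.
Proof. revert a; induction len; intros a; simpl zsum; [simpl; lra | rewrite IHlen, S_INR; lra]. Qed.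

Lemma zsum_zero f a len :
  (forall i, (a <= i < a + Z.of_nat len)%Z -> f i = 0) -> zsum f a len = 0.
Proof. intros H. rewrite (zsum_ext f (fun _ => 0)), zsum_const by auto. lra. Qed.

Lemma zsum_cat f a l1 l2 : zsum f a (l1 + l2) = zsum f a l1 + zsum f (a + Z.of_nat l1)%Z l2.
Proof.
  revert a; induction l1; intros a; simpl.
  - rewrite Z.add_0_r; lra.
  - rewrite IHl1. replace (a + 1 + Z.of_nat l1)%Z with (a + Z.pos (Pos.of_succ_nat l1))%Z by lia.
    lra.
Qed.

Lemma zsum_snoc f a l : zsum f a (S l) = zsum f a l + f (a + Z.of_nat l)%Z.
Proof. rewrite <- Nat.add_1_r, zsum_cat. simpl. lra. Qed.

Lemma zsum_le f g a len :
  (forall i, (a <= i < a + Z.of_nat len)%Z -> f i <= g i) -> zsum f a len <= zsum g a len.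
Proof.
  revert a; induction len as [|l IH]; intros a H; simpl; [lra|].
  assert (f a <= g a) by (apply H; lia).
  assert (zsum f (a + 1)%Z l <= zsum g (a + 1)%Z l) by (apply IH; intros i Hi; apply H; lia).
  lra.
Qed.

Lemma zsum_dist_le f g a len B :
  (forall i, (a <= i < a + Z.of_nat len)%Z -> Rabs (f i - g i) <= B) ->
  Rabs (zsum f a len - zsum g a len) <= INR len * B.
Proof.
  revert a; induction len as [|l IH]; intros a H; simpl zsum.
  - simpl. rewrite Rminus_0_r, Rabs_R0; lra.
  - rewrite S_INR.
    assert (H1 : Rabs (f a - g a) <= B) by (apply H; lia).
    assert (H2 : Rabs (zsum f (a + 1)%Z l - zsum g (a + 1)%Z l) <= INR l * B)
      by (apply IH; intros i Hi; apply H; lia).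
    replace (f a + zsum f (a + 1)%Z l - (g a + zsum g (a + 1)%Z l))
      with ((f a - g a) + (zsum f (a + 1)%Z l - zsum g (a + 1)%Z l)) by ring.
    eapply Rle_trans; [apply Rabs_triang | lra].
Qed.

Lemma zsum_telescope (F : Z -> R) a len :
  zsum (fun i => F (i + 1)%Z - F i) a len = F (a + Z.of_nat len)%Z - F a.
Proof.
  revert a; induction len; intros a; simpl.
  - rewrite Z.add_0_r; lra.
  - rewrite IHlen. replace (a + 1 + Z.of_nat len)%Z with (a + Z.pos (Pos.of_succ_nat len))%Z
      by lia. lra.
Qed.

Lemma zsum_swap (F : Z -> Z -> R) a l b m :
  zsum (fun i => zsum (fun j => F i j) b m) a l = zsum (fun j => zsum (fun i => F i j) a l) b m.
Proof.
  revert a; induction l; intros a; simpl.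
  - rewrite zsum_const; simpl; lra.
  - rewrite IHl, <- zsum_add. reflexivity.
Qed.

Lemma zsum_reflect f n : zsum f (- Z.of_nat n)%Z n = zsum (fun k => f (- k)%Z) 1%Z n.
Proof.
  induction n; [reflexivity|].
  change (zsum f (- Z.of_nat (S n))%Z (S n))
    with (f (- Z.of_nat (S n))%Z + zsum f (- Z.of_nat (S n) + 1)%Z n).
  replace (- Z.of_nat (S n) + 1)%Z with (- Z.of_nat n)%Z by lia.
  rewrite IHn, zsum_snoc.
  replace (- (1 + Z.of_nat n))%Z with (- Z.of_nat (S n))%Z by lia. lra.
Qed.

Lemma zsum_even f n : (forall k, f (- k)%Z = f k) ->
  zsum f (- Z.of_nat n)%Z (2 * n + 1) = 2 * zsum f 0%Z (n + 1) - f 0%Z.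
Proof.
  intros Hf. replace (2 * n + 1)%nat with (n + S n)%nat by lia.
  rewrite zsum_cat, zsum_reflect, (zsum_ext (fun k => f (- k)%Z) f) by auto.
  replace (- Z.of_nat n + Z.of_nat n)%Z with 0%Z by lia.
  rewrite Nat.add_1_r. simpl zsum at 2 3. ring.
Qed.

Lemma sum_list_app l1 l2 : sum_list (l1 ++ l2) = sum_list l1 + sum_list l2.
Proof. induction l1; simpl; [lra | rewrite IHl1; lra]. Qed.

Lemma sum_list_filter {A} (p : A -> bool) (f : A -> R) l :
  sum_list (map f (filter p l)) = sum_list (map (fun x => if p x then f x else 0) l).
Proof. induction l; simpl; auto. destruct (p a); simpl; rewrite IHl; lra. Qed.

Lemma sum_list_prod {A B} (f : A * B -> R) l1 l2 :
  sum_list (map f (list_prod l1 l2)) =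
  sum_list (map (fun a => sum_list (map (fun b => f (a, b)) l2)) l1).
Proof.
  induction l1; simpl; auto.
  rewrite map_app, sum_list_app, IHl1, map_map. reflexivity.
Qed.

Lemma length_sum_list {A} (l : list A) : INR (length l) = sum_list (map (fun _ => 1) l).
Proof. induction l; simpl length; [simpl; lra | rewrite S_INR; simpl; rewrite IHl; lra]. Qed.

Lemma sum_list_coord_range f n :
  sum_list (map f (coord_range n)) = zsum f (- Z.of_nat n)%Z (2 * n + 1).
Proof.
  assert (H : forall s len, sum_list (map f (map (fun i => (Z.of_nat i - Z.of_nat n)%Z)
                (seq s len))) = zsum f (Z.of_nat s - Z.of_nat n)%Z len).
  { intros s len; revert s; induction len as [|len IH]; intros s; simpl; auto.
    rewrite IH. replace (Z.of_nat s - Z.of_nat n + 1)%Z with (Z.of_nat (S s) - Z.of_nat n)%Z by lia.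
    reflexivity. }
  unfold coord_range; apply H.
Qed.

Definition disk_sum (n : nat) (F : Z -> Z -> R) : R :=
  zsum (fun a => zsum (fun b =>
     if Z.leb (a * a + b * b) (Z.of_nat n * Z.of_nat n) then F a b else 0)
   (- Z.of_nat n)%Z (2 * n + 1)) (- Z.of_nat n)%Z (2 * n + 1).

Lemma sum_list_disk_points f n :
  sum_list (map f (disk_points n)) = disk_sum n (fun a b => f (a, b)).
Proof.
  unfold disk_points, disk_sum.
  rewrite sum_list_filter, sum_list_prod, sum_list_coord_range.
  apply zsum_ext; intros i _. apply sum_list_coord_range.
Qed.

Lemma disk_sum_ext n F G : (forall a b, F a b = G a b) -> disk_sum n F = disk_sum n G.
Proof.
  intros H; unfold disk_sum. apply zsum_ext; intros i _. apply zsum_ext; intros j _.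
  rewrite H; auto.
Qed.

Lemma disk_sum_add n F G : disk_sum n (fun a b => F a b + G a b) = disk_sum n F + disk_sum n G.
Proof.
  unfold disk_sum. rewrite <- zsum_add. apply zsum_ext; intros i _.
  rewrite <- zsum_add. apply zsum_ext; intros j _. destruct Z.leb; lra.
Qed.

Lemma disk_sum_scal n c F : disk_sum n (fun a b => c * F a b) = c * disk_sum n F.
Proof.
  unfold disk_sum. rewrite <- zsum_scal. apply zsum_ext; intros i _.
  rewrite <- zsum_scal. apply zsum_ext; intros j _. destruct Z.leb; lra.
Qed.

Lemma disk_sum_swap n F : disk_sum n F = disk_sum n (fun a b => F b a).
Proof.
  unfold disk_sum. rewrite zsum_swap. apply zsum_ext; intros i _. apply zsum_ext; intros j _.
  rewrite (Z.add_comm (j * j)). reflexivity.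
Qed.

Lemma distE_horizontal x1 x2 y : distE (x1, y) (x2, y) = Rabs (IZR x1 - IZR x2).
Proof.
  unfold distE; cbn [fst snd]. rewrite <- sqrt_Rsqr_abs. f_equal. unfold Rsqr. ring.
Qed.

Lemma distE_vertical x y1 y2 : distE (x, y1) (x, y2) = Rabs (IZR y1 - IZR y2).
Proof.
  unfold distE; cbn [fst snd]. rewrite <- sqrt_Rsqr_abs. f_equal. unfold Rsqr. ring.
Qed.

Lemma Rabs_eq_or_opp u v : u = v \/ u = - v -> Rabs u = Rabs v.
Proof. intros [-> | ->]; [reflexivity | apply Rabs_Ropp]. Qed.

Lemma orbit_length_formula a b :
  orbit_length (a, b) =
  2 * (Rabs (2 * IZR a - IZR b) + Rabs (IZR a + IZR b) + Rabs (IZR a - 2 * IZR b)).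
Proof.
  unfold orbit_length, orbit_path, closed_length; cbn [fst snd app open_length].
  rewrite !distE_horizontal, !distE_vertical, ?plus_IZR, ?opp_IZR, ?minus_IZR.
  repeat match goal with |- context [Rabs ?e] =>
    lazymatch e with
    | 2 * IZR a - IZR b => fail | IZR a + IZR b => fail | IZR a - 2 * IZR b => fail
    | _ => first [ rewrite (Rabs_eq_or_opp e (2 * IZR a - IZR b)) by (left + right; ring)
                 | rewrite (Rabs_eq_or_opp e (IZR a + IZR b)) by (left + right; ring)
                 | rewrite (Rabs_eq_or_opp e (IZR a - 2 * IZR b)) by (left + right; ring) ]
    end end.
  ring.
Qed.

Definition chord (N t : R) : R := sqrt (N * N - t * t).

Definition zchord (n : nat) (k : Z) : Z := Z.sqrt (Z.of_nat n * Z.of_nat n - k * k).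

Lemma disk_sum_columns n (F : Z -> Z -> R) :
  disk_sum n F = zsum (fun k => zsum (F k) (- zchord n k)%Z (2 * Z.to_nat (zchord n k) + 1))
                      (- Z.of_nat n)%Z (2 * n + 1).
Proof.
  unfold disk_sum. apply zsum_ext. intros k Hk. unfold zchord.
  set (m := (Z.of_nat n * Z.of_nat n - k * k)%Z).
  assert (Hm : (0 <= m)%Z) by (unfold m; nia).
  pose proof (Z.sqrt_spec m Hm) as Hs. cbv zeta in Hs.
  pose proof (Z.sqrt_nonneg m) as Hh0.
  set (h := Z.sqrt m) in *. unfold m in Hs. clearbody h.
  assert (Hh : (0 <= h <= Z.of_nat n)%Z) by nia.
  replace (2 * n + 1)%nat with ((n - Z.to_nat h) + ((2 * Z.to_nat h + 1) + (n - Z.to_nat h)))%nat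
    by lia.
  assert (Hout : forall i, (i < - h \/ h < i)%Z ->
    (if Z.leb (k * k + i * i) (Z.of_nat n * Z.of_nat n) then F k i else 0) = 0).
  { intros i Hi. destruct (Z.leb_spec (k * k + i * i) (Z.of_nat n * Z.of_nat n)); auto.
    exfalso; destruct Hi as [Hi | Hi].
    - assert ((h + 1) * (h + 1) <= i * i)%Z by nia. lia.
    - assert ((h + 1) * (h + 1) <= i * i)%Z by nia. lia. }
  rewrite zsum_cat, zsum_cat, (zsum_zero _ (- Z.of_nat n)%Z), (zsum_zero _ (_ + _ + _)%Z)
    by (intros i Hi; apply Hout; lia).
  replace (- Z.of_nat n + Z.of_nat (n - Z.to_nat h))%Z with (- h)%Z by lia.
  rewrite Rplus_0_l, Rplus_0_r. apply zsum_ext. intros i Hi.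
  destruct (Z.leb_spec (k * k + i * i) (Z.of_nat n * Z.of_nat n)); [reflexivity | nia].
Qed.

Lemma chord_nonneg N t : 0 <= chord N t.
Proof. apply sqrt_pos. Qed.

Lemma chord_sq N t : -N <= t <= N -> chord N t * chord N t = N * N - t * t.
Proof. intros. apply sqrt_sqrt. nra. Qed.

Lemma chord_le N t : 0 <= N -> chord N t <= N.
Proof.
  intros. apply Rle_trans with (sqrt (N * N)); [apply sqrt_le_1_alt; nra | rewrite sqrt_square; lra].
Qed.

Lemma chord_decr N x y : 0 <= x -> x <= y -> chord N y <= chord N x.
Proof. intros. apply sqrt_le_1_alt. nra. Qed.

Lemma chord_pos N x : -N < x < N -> 0 < chord N x.
Proof. intros. apply sqrt_lt_R0. nra. Qed.

Lemma chord_opp N x : chord N (- x) = chord N x.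
Proof. unfold chord. f_equal. ring. Qed.

Lemma chord_center N : 0 <= N -> chord N 0 = N.
Proof. intros. unfold chord. rewrite Rmult_0_r, Rminus_0_r. apply sqrt_square; auto. Qed.

Lemma chord_edge N : chord N N = 0.
Proof. unfold chord. rewrite Rminus_diag. apply sqrt_0. Qed.

Lemma zchord_spec n k : (- Z.of_nat n <= k <= Z.of_nat n)%Z ->
  (0 <= zchord n k)%Z /\
  IZR (zchord n k) <= chord (INR n) (IZR k) < IZR (zchord n k) + 1.
Proof.
  intros Hk. unfold zchord, chord.
  set (m := (Z.of_nat n * Z.of_nat n - k * k)%Z).
  assert (Hm : (0 <= m)%Z) by (unfold m; nia).
  pose proof (Z.sqrt_spec m Hm) as Hs. cbv zeta in Hs. set (h := Z.sqrt m) in *.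
  replace (INR n * INR n - IZR k * IZR k) with (IZR m)
    by (unfold m; rewrite minus_IZR, !mult_IZR, <- INR_IZR_INZ; reflexivity).
  assert (Hh : (0 <= h)%Z) by apply Z.sqrt_nonneg.
  split; [exact Hh|].
  assert (Hl : IZR h * IZR h <= IZR m) by (rewrite <- mult_IZR; apply IZR_le; lia).
  assert (Hu : IZR m < (IZR h + 1) * (IZR h + 1))
    by (rewrite <- succ_IZR, <- mult_IZR; apply IZR_lt; lia).
  apply IZR_le in Hh.
  pose proof (sqrt_pos (IZR m)). pose proof (sqrt_sqrt (IZR m) ltac:(apply IZR_le; lia)).
  split; nra.
Qed.

Lemma IZR_abs_le_INR n k : (- Z.of_nat n <= k <= Z.of_nat n)%Z -> Rabs (IZR k) <= INR n.
Proof.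
  intros Hk. rewrite INR_IZR_INZ. apply Rabs_le.
  split; [rewrite <- opp_IZR|]; apply IZR_le; lia.
Qed.

(** * Comparison of monotone sums with integrals *)

Definition bracketed_on (F g : R -> R) (a b : R) : Prop :=
  forall p q, a <= p -> p <= q -> q <= b -> g q * (q - p) <= F q - F p <= g p * (q - p).

Definition nonincreasing_on (g : R -> R) (a b : R) : Prop :=
  forall x y, a <= x -> x <= y -> y <= b -> g y <= g x.

Lemma bracketed_on_antiderivative F g a b :
  (forall x, a < x < b -> is_derive F x (g x)) ->
  (forall x, a <= x <= b -> continuity_pt F x) ->
  nonincreasing_on g a b -> bracketed_on F g a b.
Proof.
  intros Hd Hc Hg p q Hp Hpq Hq.
  destruct (Req_dec p q) as [<- | Hne]; [rewrite Rminus_diag; lra|].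
  destruct (MVT_gen F p q g) as [c [Hc1 ->]];
    rewrite ?Rmin_left, ?Rmax_right in * by lra.
  - intros x Hx. apply Hd. lra.
  - intros x Hx. apply Hc. lra.
  - assert (g q <= g c) by (apply Hg; lra). assert (g c <= g p) by (apply Hg; lra).
    split; apply Rmult_le_compat_r; lra.
Qed.

Definition glue (c : R) (F1 F2 : R -> R) (t : R) : R :=
  if Rle_dec t c then F1 t else F2 t.

Lemma glue_left c F1 F2 t : t <= c -> glue c F1 F2 t = F1 t.
Proof. intros. unfold glue. destruct Rle_dec; [reflexivity | lra]. Qed.

Lemma glue_right c F1 F2 t : F1 c = F2 c -> c <= t -> glue c F1 F2 t = F2 t.
Proof.
  intros Hc Ht. unfold glue. destruct Rle_dec; [|reflexivity].
  replace t with c by lra. exact Hc.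
Qed.

Lemma bracketed_on_glue F1 F2 g a c b :
  a <= c <= b -> F1 c = F2 c -> nonincreasing_on g a b ->
  bracketed_on F1 g a c -> bracketed_on F2 g c b -> bracketed_on (glue c F1 F2) g a b.
Proof.
  intros Hc Hc12 Hg H1 H2 p q Hp Hpq Hq.
  destruct (Rle_dec q c).
  { rewrite !glue_left by lra. apply H1; lra. }
  destruct (Rle_dec c p).
  { rewrite !glue_right by (exact Hc12 || lra). apply H2; lra. }
  rewrite (glue_left c F1 F2 p), (glue_right c F1 F2 q) by (exact Hc12 || lra).
  specialize (H1 p c ltac:(lra) ltac:(lra) ltac:(lra)).
  specialize (H2 c q ltac:(lra) ltac:(lra) ltac:(lra)).
  assert (g q * (c - p) <= g c * (c - p)) by (apply Rmult_le_compat_r; [|apply Hg]; lra).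
  assert (g c * (q - c) <= g p * (q - c)) by (apply Rmult_le_compat_r; [|apply Hg]; lra).
  split; nra.
Qed.

Lemma zsum_bracketed F g n :
  bracketed_on F g 0 (INR n) -> 0 <= g (INR n) ->
  F (INR n) - F 0 <= zsum (fun i => g (IZR i)) 0%Z (n + 1) <= F (INR n) - F 0 + g 0.
Proof.
  intros HF Hgn.
  assert (Hsteps : forall m, (m <= n)%nat ->
    zsum (fun i => g (IZR i)) 1%Z m <= F (INR m) - F 0 <= zsum (fun i => g (IZR i)) 0%Z m).
  { induction m as [|m IH]; intros Hm; [simpl; lra|].
    rewrite !zsum_snoc, S_INR.
    replace (IZR (1 + Z.of_nat m)) with (INR m + 1) by (rewrite plus_IZR, <- INR_IZR_INZ; lra).
    replace (IZR (0 + Z.of_nat m)) with (INR m) by (rewrite Z.add_0_l, <- INR_IZR_INZ; lra).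
    assert (Hm' : INR m + 1 <= INR n) by (rewrite <- S_INR; apply le_INR; lia).
    specialize (HF (INR m) (INR m + 1) (pos_INR m) ltac:(lra) Hm').
    specialize (IH ltac:(lia)). replace (INR m + 1 - INR m) with 1 in HF by ring. lra. }
  destruct (Hsteps n (le_n n)) as [H1 H2].
  rewrite Nat.add_1_r. split.
  - rewrite zsum_snoc, Z.add_0_l, <- INR_IZR_INZ. lra.
  - simpl zsum. lra.
Qed.

(** * Counting lattice points *)

Lemma chord_continuous N x : continuous (chord N) x.
Proof.
  apply continuous_sqrt_comp.
  apply (@ex_derive_continuous R_AbsRing R_NormedModule). auto_derive. auto.
Qed.

Lemma Rdiv_eq_of_mul_eq a b c : b <> 0 -> a = c * b -> a / b = c.
Proof. intros Hb ->. field. exact Hb. Qed.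

Section ChordIntegral.
Variable N : R.
Hypothesis N_pos : 0 < N.

(** Two closed forms of [t |-> int_0^t chord N s ds]: the first is singular at [t = N],
    the second at [t = 0]; they are glued at [N / 2]. *)
Definition chord_int_lo (t : R) : R :=
  (t * chord N t + N * N * atan (t / chord N t)) / 2.
Definition chord_int_hi (t : R) : R :=
  (t * chord N t + N * N * (PI / 2 - atan (chord N t / t))) / 2.
Definition chord_int : R -> R := glue (N / 2) chord_int_lo chord_int_hi.

Lemma chord_int_lo_derive x : -N < x < N -> is_derive chord_int_lo x (chord N x).
Proof.
  intros Hx. unfold chord_int_lo, chord.
  assert (Hp : 0 < N * N - x * x) by nra.
  pose proof (sqrt_lt_R0 _ Hp). pose proof (sqrt_sqrt _ (Rlt_le _ _ Hp)).
  auto_derive; replace (N * N + - (x * x)) with (N * N - x * x) by ring.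
  - repeat split; try apply Rgt_not_eq; lra.
  - set (s := sqrt (N * N - x * x)) in *.
    field_simplify; try nra. apply Rdiv_eq_of_mul_eq; nra.
Qed.

Lemma chord_int_hi_derive x : 0 < x < N -> is_derive chord_int_hi x (chord N x).
Proof.
  intros Hx. unfold chord_int_hi, chord.
  assert (Hp : 0 < N * N - x * x) by nra.
  pose proof (sqrt_lt_R0 _ Hp). pose proof (sqrt_sqrt _ (Rlt_le _ _ Hp)).
  auto_derive; replace (N * N + - (x * x)) with (N * N - x * x) by ring.
  - repeat split; try apply Rgt_not_eq; lra.
  - set (s := sqrt (N * N - x * x)) in *.
    field_simplify; try nra. apply Rdiv_eq_of_mul_eq; nra.
Qed.

Lemma chord_int_lo_continuous x : -N < x < N -> continuity_pt chord_int_lo x.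
Proof.
  intros Hx. apply continuity_pt_filterlim.
  apply (@ex_derive_continuous R_AbsRing R_NormedModule).
  eexists. apply chord_int_lo_derive; auto.
Qed.

Lemma chord_int_hi_continuous x : 0 < x -> continuity_pt chord_int_hi x.
Proof.
  intros Hx. apply continuity_pt_filterlim. unfold chord_int_hi, Rdiv.
  apply (continuous_mult
    (fun t => t * chord N t + N * N * (PI / 2 - atan (chord N t * / t))) (fun _ => / 2));
    [|apply continuous_const].
  apply (continuous_plus (fun t => t * chord N t)
    (fun t => N * N * (PI / 2 - atan (chord N t * / t)))).
  - apply (continuous_mult (fun t => t) (chord N)); [apply continuous_id | apply chord_continuous].
  - apply (continuous_mult (fun _ => N * N) (fun t => PI / 2 - atan (chord N t * / t)));
      [apply continuous_const|].
    apply (continuous_plus (fun _ => PI / 2) (fun t => - atan (chord N t * / t)));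
      [apply continuous_const|].
    apply (continuous_opp (fun t => atan (chord N t * / t))), continuous_atan_comp.
    apply (continuous_mult (chord N) (fun t => / t));
      [apply chord_continuous | apply continuous_Rinv; lra].
Qed.

Lemma chord_int_lo_hi : chord_int_lo (N / 2) = chord_int_hi (N / 2).
Proof.
  unfold chord_int_lo, chord_int_hi. do 3 f_equal.
  assert (Hw : 0 < chord N (N / 2)) by (apply chord_pos; lra).
  rewrite <- atan_inv by (apply Rdiv_lt_0_compat; lra).
  f_equal. field. lra.
Qed.

Lemma chord_int_0 : chord_int 0 = 0.
Proof.
  unfold chord_int. rewrite glue_left by lra. unfold chord_int_lo.
  unfold Rdiv; rewrite ?Rmult_0_l, ?Rmult_0_r, atan_0; lra.
Qed.

Lemma chord_int_N : chord_int N = N * N * PI / 4.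
Proof.
  unfold chord_int. rewrite glue_right by (apply chord_int_lo_hi || lra).
  unfold chord_int_hi. rewrite chord_edge.
  unfold Rdiv; rewrite ?Rmult_0_l, ?Rmult_0_r, atan_0; lra.
Qed.

Lemma chord_nonincreasing : nonincreasing_on (chord N) 0 N.
Proof. intros x y Hx Hxy _. apply chord_decr; lra. Qed.

Lemma chord_int_bracketed : bracketed_on chord_int (chord N) 0 N.
Proof.
  apply bracketed_on_glue; [lra | apply chord_int_lo_hi | apply chord_nonincreasing | |];
    apply bracketed_on_antiderivative.
  - intros x Hx. apply chord_int_lo_derive. lra.
  - intros x Hx. apply chord_int_lo_continuous. lra.
  - intros x y Hx Hxy Hy. apply chord_nonincreasing; lra.
  - intros x Hx. apply chord_int_hi_derive. lra.
  - intros x Hx. apply chord_int_hi_continuous. lra.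
  - intros x y Hx Hxy Hy. apply chord_nonincreasing; lra.
Qed.
End ChordIntegral.

Lemma zsum_chord n : (1 <= n)%nat ->
  INR n * INR n * PI / 4 <= zsum (fun i => chord (INR n) (IZR i)) 0%Z (n + 1)
    <= INR n * INR n * PI / 4 + INR n.
Proof.
  intros Hn.
  assert (HN : 0 < INR n) by (apply lt_0_INR; lia).
  pose proof (zsum_bracketed (chord_int (INR n)) (chord (INR n)) n
    (chord_int_bracketed (INR n) HN) (chord_nonneg _ _)) as H.
  rewrite chord_int_N, chord_int_0, chord_center in H by lra. lra.
Qed.

Lemma INR_2n1 n : INR (2 * n + 1) = 2 * INR n + 1.
Proof. rewrite plus_INR, mult_INR. simpl. ring. Qed.

Lemma disk_count_columns n :
  disk_sum n (fun _ _ => 1) =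
  zsum (fun k => 2 * IZR (zchord n k) + 1) (- Z.of_nat n)%Z (2 * n + 1).
Proof.
  rewrite disk_sum_columns. apply zsum_ext. intros k _.
  rewrite zsum_const, Rmult_1_r, INR_2n1, INR_IZR_INZ, Z2Nat.id by apply Z.sqrt_nonneg.
  reflexivity.
Qed.

Lemma disk_count_ge1 n : 1 <= disk_sum n (fun _ _ => 1).
Proof.
  rewrite disk_count_columns.
  apply Rle_trans with (zsum (fun _ => 1) (- Z.of_nat n)%Z (2 * n + 1)).
  - rewrite zsum_const, INR_2n1. pose proof (pos_INR n). lra.
  - apply zsum_le. intros k _.
    assert (0 <= IZR (zchord n k)) by (apply IZR_le, Z.sqrt_nonneg). lra.
Qed.

Lemma disk_count n : (1 <= n)%nat ->
  Rabs (disk_sum n (fun _ _ => 1) - PI * (INR n * INR n)) <= 5 * INR n.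
Proof.
  intros Hn. set (N := INR n).
  assert (HN : 1 <= N) by (apply (le_INR 1); lia).
  assert (Hcol : Rabs (disk_sum n (fun _ _ => 1)
                   - zsum (fun k => 2 * chord N (IZR k)) (- Z.of_nat n)%Z (2 * n + 1))
                 <= INR (2 * n + 1) * 1).
  { rewrite disk_count_columns. apply zsum_dist_le. intros k Hk.
    destruct (zchord_spec n k ltac:(lia)) as [_ Hw]. fold N in Hw. apply Rabs_le. lra. }
  rewrite zsum_scal, zsum_even, chord_center, INR_2n1 in Hcol
    by (lra || (intros k; rewrite opp_IZR; apply chord_opp)).
  destruct (zsum_chord n Hn) as [C1 C2]. fold N in C1, C2.
  fold N in Hcol. apply Rabs_le. apply Rabs_le_between in Hcol. lra.
Qed.

(** * Sums of [|g a + b|] over the disk *)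

(** [abs_mass u w] is the integral of [|u + s|] over [-w <= s <= w]. *)
Definition abs_antider (x : R) : R := x * Rabs x / 2.

Definition abs_mass (u w : R) : R := abs_antider (u + w) - abs_antider (u - w).

Lemma abs_mass_small u w : Rabs u <= w -> abs_mass u w = u * u + w * w.
Proof. unfold abs_mass, abs_antider, Rabs. repeat destruct Rcase_abs; intros; nra. Qed.

Lemma abs_mass_large u w : 0 <= w -> w <= Rabs u -> abs_mass u w = 2 * Rabs u * w.
Proof. unfold abs_mass, abs_antider, Rabs. repeat destruct Rcase_abs; intros; nra. Qed.

Lemma abs_mass_opp u w : abs_mass (- u) w = abs_mass u w.
Proof.
  unfold abs_mass, abs_antider.
  replace (- u + w) with (- (u - w)) by ring. replace (- u - w) with (- (u + w)) by ring.
  rewrite !Rabs_Ropp. field.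
Qed.

Lemma abs_antider_midpoint p :
  Rabs (Rabs p - (abs_antider (p + / 2) - abs_antider (p - / 2))) <= / 4.
Proof.
  unfold abs_antider, Rabs at 2 3 4. repeat destruct Rcase_abs; unfold Rabs; destruct Rcase_abs;
    nra.
Qed.

Lemma abs_antider_lipschitz x y d B :
  Rabs (x - y) <= d -> Rabs x + Rabs y <= B -> Rabs (abs_antider x - abs_antider y) <= d * B / 2.
Proof.
  intros Hd HB.
  assert (H : Rabs (x * Rabs x - y * Rabs y) <= Rabs (x - y) * (Rabs x + Rabs y))
    by (unfold Rabs; repeat destruct Rcase_abs; nra).
  unfold abs_antider.
  replace (x * Rabs x / 2 - y * Rabs y / 2) with ((x * Rabs x - y * Rabs y) / 2) by field.
  unfold Rdiv. rewrite Rabs_mult, (Rabs_pos_eq (/ 2)) by lra.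
  apply Rmult_le_compat_r; [lra|]. eapply Rle_trans; [exact H|].
  apply Rmult_le_compat; auto using Rabs_pos, Rplus_le_le_0_compat.
Qed.

(** A row of lattice points of half-length [h] approximates the integral over the
    interval of half-length [w], for [h <= w < h + 1]: compare each [|u + s|] with the
    integral over [[s - 1/2, s + 1/2]], then correct the two ends. *)
Lemma zsum_abs_row (u N w : R) (h : Z) :
  Rabs u <= N -> (0 <= h)%Z -> IZR h <= w < IZR h + 1 -> w <= N ->
  Rabs (zsum (fun s => Rabs (u + IZR s)) (- h)%Z (2 * Z.to_nat h + 1) - abs_mass u w)
  <= 3 * N + 3.
Proof.
  intros Hu Hh Hw HwN.
  set (len := (2 * Z.to_nat h + 1)%nat).
  assert (Hlen : INR len = 2 * IZR h + 1).
  { unfold len. rewrite INR_2n1, INR_IZR_INZ, Z2Nat.id by lia. reflexivity. }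
  assert (Hh0 : 0 <= IZR h) by (apply IZR_le; lia).
  pose proof (zsum_telescope (fun i => abs_antider (u + IZR i - / 2)) (- h)%Z len) as Htel.
  replace (- h + Z.of_nat len)%Z with (h + 1)%Z in Htel by (unfold len; lia).
  assert (Hmid : Rabs (zsum (fun s => Rabs (u + IZR s)) (- h)%Z len
      - (abs_antider (u + IZR (h + 1) - / 2) - abs_antider (u + IZR (- h) - / 2)))
      <= INR len * / 4).
  { rewrite <- Htel. apply zsum_dist_le. intros i _.
    rewrite plus_IZR. replace (u + (IZR i + 1) - / 2) with (u + IZR i + / 2) by field.
    apply abs_antider_midpoint. }
  rewrite plus_IZR, opp_IZR in Hmid.
  assert (Hhi : Rabs (abs_antider (u + (IZR h + 1) - / 2) - abs_antider (u + w))
                <= / 2 * (4 * N + 1) / 2).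
  { apply abs_antider_lipschitz; [apply Rabs_le; lra|].
    pose proof (Rabs_triang u (IZR h + / 2)) as H1. pose proof (Rabs_triang u w) as H2.
    rewrite (Rabs_pos_eq (IZR h + / 2)) in H1 by lra. rewrite (Rabs_pos_eq w) in H2 by lra.
    replace (u + (IZR h + 1) - / 2) with (u + (IZR h + / 2)) by field. lra. }
  assert (Hlo : Rabs (abs_antider (u + - IZR h - / 2) - abs_antider (u - w))
                <= / 2 * (4 * N + 1) / 2).
  { apply abs_antider_lipschitz; [apply Rabs_le; lra|].
    pose proof (Rabs_triang u (- (IZR h + / 2))) as H1. pose proof (Rabs_triang u (- w)) as H2.
    rewrite Rabs_Ropp, (Rabs_pos_eq (IZR h + / 2)) in H1 by lra.
    rewrite Rabs_Ropp, (Rabs_pos_eq w) in H2 by lra. fold (u - w) in H2.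
    replace (u + - IZR h - / 2) with (u + - (IZR h + / 2)) by field. lra. }
  unfold abs_mass. rewrite Hlen in Hmid.
  apply Rabs_le. apply Rabs_le_between in Hmid, Hhi, Hlo. lra.
Qed.

Lemma Rabs_le_of_sq x y : 0 <= y -> x * x <= y * y -> Rabs x <= y.
Proof. intros. unfold Rabs; destruct Rcase_abs; nra. Qed.

Lemma Rabs_ge_of_sq x y : 0 <= y -> y * y <= x * x -> y <= Rabs x.
Proof. intros. unfold Rabs; destruct Rcase_abs; nra. Qed.

Section ColumnMass.
Variables N g : R.
Hypothesis N_pos : 0 < N.
Hypothesis g_sq_le1 : g * g <= 1.

(** [col_mass t] is the integral of [|g t + s|] over the chord of the disk at abscissa [t];
    inside [|t| <= crossing] the chord contains the zero [s = - g t] of the integrand. *)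
Definition col_mass (t : R) : R := abs_mass (g * t) (chord N t).

Definition crossing : R := N / sqrt (1 + g * g).

Lemma sqrt_1_g_pos : 0 < sqrt (1 + g * g).
Proof. apply sqrt_lt_R0. nra. Qed.

Lemma crossing_pos : 0 < crossing.
Proof. apply Rdiv_lt_0_compat; [lra | apply sqrt_1_g_pos]. Qed.

Lemma crossing_sq : crossing * crossing * (1 + g * g) = N * N.
Proof.
  unfold crossing. pose proof sqrt_1_g_pos. rewrite <- (sqrt_sqrt (1 + g * g)) at 3 by nra.
  field. lra.
Qed.

Lemma crossing_le : crossing <= N.
Proof. pose proof crossing_sq. pose proof crossing_pos. nra. Qed.

Lemma chord_crossing : chord N crossing = Rabs g * crossing.
Proof.
  pose proof crossing_sq. pose proof crossing_pos. pose proof (Rabs_pos g).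
  assert (Rabs g * Rabs g = g * g) by (rewrite <- Rabs_mult; apply Rabs_pos_eq; nra).
  unfold chord. rewrite <- (sqrt_square (Rabs g * crossing)) by nra. f_equal. nra.
Qed.

Lemma col_mass_inner t : 0 <= t <= crossing -> col_mass t = g * g * (t * t) + (N * N - t * t).
Proof.
  intros Ht. pose proof crossing_sq. pose proof crossing_le.
  unfold col_mass. rewrite abs_mass_small; [rewrite chord_sq by lra; ring|].
  apply Rabs_le_of_sq; [apply chord_nonneg|]. rewrite chord_sq by lra.
  assert (t * t <= crossing * crossing) by nra. nra.
Qed.

Lemma col_mass_outer t : crossing <= t <= N -> col_mass t = 2 * Rabs g * t * chord N t.
Proof.
  intros Ht. pose proof crossing_sq. pose proof crossing_pos.
  unfold col_mass. rewrite abs_mass_large; [| apply chord_nonneg |].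
  - rewrite Rabs_mult, (Rabs_pos_eq t) by lra. ring.
  - apply Rabs_ge_of_sq; [apply chord_nonneg|]. rewrite chord_sq by lra.
    assert (crossing * crossing <= t * t) by nra. nra.
Qed.

Lemma col_mass_opp t : col_mass (- t) = col_mass t.
Proof.
  unfold col_mass. rewrite chord_opp, <- abs_mass_opp. f_equal. ring.
Qed.

Lemma col_mass_0 : col_mass 0 = N * N.
Proof. pose proof crossing_pos. rewrite col_mass_inner by lra. ring. Qed.

Lemma col_mass_N : col_mass N = 0.
Proof. pose proof crossing_le. rewrite col_mass_outer, chord_edge by lra. ring. Qed.

(** [t^2 (N^2 - t^2)] decreases for [t^2 >= N^2 / 2], and [crossing >= N / sqrt 2]
    because [g^2 <= 1]. *)
Lemma t_chord_nonincreasing : nonincreasing_on (fun t => t * chord N t) crossing N.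
Proof.
  intros x y Hx Hxy Hy. pose proof crossing_sq. pose proof crossing_pos.
  pose proof (chord_nonneg N x). pose proof (chord_nonneg N y).
  apply Rsqr_incr_0_var; [| apply Rmult_le_pos; lra]. unfold Rsqr.
  replace (y * chord N y * (y * chord N y)) with (y * y * (chord N y * chord N y)) by ring.
  replace (x * chord N x * (x * chord N x)) with (x * x * (chord N x * chord N x)) by ring.
  rewrite !chord_sq by lra.
  assert (0 <= (y * y - x * x) * (y * y + x * x - N * N)) by (apply Rmult_le_pos; nra).
  nra.
Qed.

Lemma col_mass_nonincreasing : nonincreasing_on col_mass 0 N.
Proof.
  pose proof crossing_le. pose proof crossing_pos. pose proof (Rabs_pos g).
  assert (Hin : nonincreasing_on col_mass 0 crossing).
  { intros x y Hx Hxy Hy. rewrite !col_mass_inner by lra.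
    assert (0 <= (1 - g * g) * (y * y - x * x)) by (apply Rmult_le_pos; nra). nra. }
  assert (Hout : nonincreasing_on col_mass crossing N).
  { intros x y Hx Hxy Hy. rewrite !col_mass_outer by lra.
    pose proof (t_chord_nonincreasing x y Hx Hxy Hy). cbv beta in *. nra. }
  intros x y Hx Hxy Hy.
  destruct (Rle_dec y crossing); [apply Hin; lra|].
  destruct (Rle_dec crossing x); [apply Hout; lra|].
  apply Rle_trans with (col_mass crossing); [apply Hout | apply Hin]; lra.
Qed.

Definition col_int_inner (t : R) : R := N * N * t - (1 - g * g) * (t * t * t) / 3.
Definition col_int_tail (t : R) : R := 2 * Rabs g / 3 * (N * N - t * t) * chord N t.
Definition col_int_outer (t : R) : R :=
  col_int_inner crossing + col_int_tail crossing - col_int_tail t.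
Definition col_int : R -> R := glue crossing col_int_inner col_int_outer.

Lemma col_int_inner_derive x : is_derive col_int_inner x (g * g * (x * x) + (N * N - x * x)).
Proof. unfold col_int_inner. auto_derive; [exact I | field]. Qed.

Lemma col_int_outer_derive x : -N < x < N ->
  is_derive col_int_outer x (2 * Rabs g * x * chord N x).
Proof.
  intros Hx. unfold col_int_outer, col_int_tail, chord.
  assert (Hp : 0 < N * N - x * x) by nra.
  pose proof (sqrt_lt_R0 _ Hp). pose proof (sqrt_sqrt _ (Rlt_le _ _ Hp)).
  auto_derive; replace (N * N + - (x * x)) with (N * N - x * x) by ring; [lra|].
  set (s := sqrt (N * N - x * x)) in *. rewrite <- H0. field. lra.
Qed.

Lemma col_int_outer_continuous x : continuity_pt col_int_outer x.
Proof.
  apply continuity_pt_filterlim. unfold col_int_outer, col_int_tail.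
  apply (continuous_minus (fun _ => _)
    (fun t => 2 * Rabs g / 3 * (N * N - t * t) * chord N t)); [apply continuous_const|].
  apply (continuous_mult (fun t => 2 * Rabs g / 3 * (N * N - t * t)) (chord N));
    [| apply chord_continuous].
  apply (@ex_derive_continuous R_AbsRing R_NormedModule). auto_derive. auto.
Qed.

Lemma col_int_bracketed : bracketed_on col_int col_mass 0 N.
Proof.
  pose proof crossing_le. pose proof crossing_pos.
  apply bracketed_on_glue;
    [lra | unfold col_int_outer; ring | apply col_mass_nonincreasing | |];
    apply bracketed_on_antiderivative.
  - intros x Hx. rewrite col_mass_inner by lra. apply col_int_inner_derive.
  - intros x _. apply continuity_pt_filterlim, (@ex_derive_continuous R_AbsRing R_NormedModule).
    eexists. apply col_int_inner_derive.
  - intros x y Hx Hxy Hy. apply col_mass_nonincreasing; lra.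
  - intros x Hx. rewrite col_mass_outer by lra. apply col_int_outer_derive. lra.
  - intros x _. apply col_int_outer_continuous.
  - intros x y Hx Hxy Hy. apply col_mass_nonincreasing; lra.
Qed.

Lemma col_int_0 : col_int 0 = 0.
Proof.
  pose proof crossing_pos. unfold col_int. rewrite glue_left by lra.
  unfold col_int_inner. field.
Qed.

Lemma col_int_N : col_int N = 2 / 3 * sqrt (1 + g * g) * (N * N * N).
Proof.
  pose proof crossing_le. pose proof crossing_pos.
  pose proof sqrt_1_g_pos. pose proof (sqrt_sqrt (1 + g * g) ltac:(nra)) as Hr.
  unfold col_int. rewrite glue_right by (unfold col_int_outer; ring || lra).
  unfold col_int_outer, col_int_tail, col_int_inner. rewrite chord_edge, chord_crossing.
  assert (Hg : Rabs g ^ 2 = g * g) by (rewrite RPow_abs, Rabs_pos_eq by apply pow2_ge_0; ring).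
  assert (HN : N = crossing * sqrt (1 + g * g)) by (unfold crossing; field; lra).
  rewrite HN. set (r := sqrt (1 + g * g)) in *. ring_simplify.
  replace (r ^ 4) with ((1 + g * g) ^ 2) by (rewrite <- Hr; ring).
  replace (r ^ 2) with (1 + g * g) by (rewrite <- Hr; ring).
  rewrite <- Hg. field.
Qed.
End ColumnMass.

Lemma disk_sum_abs_linear n g : (1 <= n)%nat -> g * g <= 1 ->
  Rabs (disk_sum n (fun a b => Rabs (g * IZR a + IZR b))
        - 4 / 3 * sqrt (1 + g * g) * (INR n * INR n * INR n))
  <= INR n * INR n + (2 * INR n + 1) * (3 * INR n + 3).
Proof.
  intros Hn Hg. set (N := INR n).
  assert (HN : 0 < N) by (apply lt_0_INR; lia).
  assert (Hcol : Rabs (disk_sum n (fun a b => Rabs (g * IZR a + IZR b))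
                   - zsum (fun k => col_mass N g (IZR k)) (- Z.of_nat n)%Z (2 * n + 1))
                 <= INR (2 * n + 1) * (3 * N + 3)).
  { rewrite disk_sum_columns. apply zsum_dist_le. intros k Hk.
    destruct (zchord_spec n k ltac:(lia)) as [Hh Hw].
    pose proof (IZR_abs_le_INR n k ltac:(lia)) as Hkn. fold N in Hw, Hkn.
    assert (Rabs g <= 1) by (apply Rabs_le_of_sq; lra).
    apply zsum_abs_row; auto; [| apply chord_le; lra].
    rewrite Rabs_mult. pose proof (Rabs_pos g). pose proof (Rabs_pos (IZR k)). nra. }
  rewrite zsum_even, col_mass_0, INR_2n1 in Hcol
    by (lra || (intros k; rewrite opp_IZR; apply col_mass_opp)).
  pose proof (zsum_bracketed (col_int N g) (col_mass N g) n
    (col_int_bracketed N g HN Hg)) as Hsum. fold N in Hsum, Hcol.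
  rewrite col_int_N, col_int_0, col_mass_0, col_mass_N in Hsum by lra.
  specialize (Hsum (Rle_refl 0)).
  apply Rabs_le. apply Rabs_le_between in Hcol. lra.
Qed.

Lemma disk_sum_orbit_length n :
  sum_list (map orbit_length (disk_points n)) =
  2 * (4 * disk_sum n (fun a b => Rabs (- / 2 * IZR a + IZR b))
       + disk_sum n (fun a b => Rabs (1 * IZR a + IZR b))).
Proof.
  assert (Hhalf : forall a b, Rabs (2 * IZR b - IZR a) = 2 * Rabs (- / 2 * IZR a + IZR b)).
  { intros a b. rewrite <- (Rabs_pos_eq 2) at 2 by lra. rewrite <- Rabs_mult. f_equal. field. }
  rewrite sum_list_disk_points, (disk_sum_ext _ _ _ (fun a b => orbit_length_formula a b)).
  rewrite disk_sum_scal, !disk_sum_add.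
  rewrite (disk_sum_swap n (fun a b => Rabs (2 * IZR a - IZR b))).
  rewrite (disk_sum_ext n (fun a b => Rabs (2 * IZR b - IZR a))
                          (fun a b => 2 * Rabs (- / 2 * IZR a + IZR b))) by apply Hhalf.
  rewrite (disk_sum_ext n (fun a b => Rabs (IZR a - 2 * IZR b))
                          (fun a b => 2 * Rabs (- / 2 * IZR a + IZR b)))
    by (intros; rewrite <- Hhalf, <- Rabs_Ropp; f_equal; ring).
  rewrite (disk_sum_ext n (fun a b => Rabs (IZR a + IZR b)) (fun a b => Rabs (1 * IZR a + IZR b)))
    by (intros; rewrite Rmult_1_l; reflexivity).
  rewrite !disk_sum_scal. ring.
Qed.

Lemma sqrt_1_quarter : sqrt (1 + - / 2 * - / 2) = sqrt 5 / 2.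
Proof.
  pose proof (sqrt_pos 5). pose proof (sqrt_sqrt 5 ltac:(lra)).
  apply sqrt_lem_1; nra.
Qed.

Lemma quotient_deviation (S C K N : R) :
  1 <= N -> 0 <= K <= 16 ->
  Rabs (S - K * (N * N * N)) <= 190 * (N * N) ->
  Rabs (C - PI * (N * N)) <= 5 * N -> 1 <= C ->
  Rabs (S / C - K / PI * N) <= 20000.
Proof.
  intros HN HK HS HC HC1.
  pose proof PI_RGT_0 as Hpi0. pose proof PI_4 as Hpi4. pose proof PI2_1 as Hpi1.
  replace (S / C - K / PI * N) with
    ((PI * (S - K * (N * N * N)) - K * N * (C - PI * (N * N))) / (PI * C)) by (field; lra).
  unfold Rdiv. rewrite Rabs_mult, Rabs_inv, (Rabs_pos_eq (PI * C)) by nra.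
  apply Rmult_le_reg_r with (PI * C); [nra|].
  rewrite Rmult_assoc, Rinv_l by nra.
  assert (Hnum : Rabs (PI * (S - K * (N * N * N)) - K * N * (C - PI * (N * N)))
                 <= 840 * (N * N)).
  { unfold Rminus at 1. eapply Rle_trans; [apply Rabs_triang|].
    rewrite Rabs_Ropp, !Rabs_mult, (Rabs_pos_eq PI), (Rabs_pos_eq K), (Rabs_pos_eq N) by lra.
    assert (PI * Rabs (S - K * (N * N * N)) <= 4 * (190 * (N * N)))
      by (apply Rmult_le_compat; try lra; apply Rabs_pos).
    assert (K * N * Rabs (C - PI * (N * N)) <= 16 * N * (5 * N))
      by (apply Rmult_le_compat; try apply Rabs_pos; nra).
    lra. }
  apply Rabs_le_between in HC.
  assert (840 * (N * N) <= 20000 * (PI * C)).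
  { destruct (Rle_dec 6 N); [nra|]. assert (N * N <= 36) by nra. nra. }
  lra.
Qed.

Theorem theorem1p2 :
  exists C : R, forall n : nat, (1 <= n)%nat ->
    Rabs (avg_orbit_length n - 8 / (3 * PI) * (sqrt 2 + 2 * sqrt 5) * INR n) <= C.
Proof.
  exists 20000. intros n Hn.
  set (N := INR n). assert (HN : 1 <= N) by (apply (le_INR 1); lia).
  pose proof (disk_sum_abs_linear n (- / 2) Hn ltac:(lra)) as HX.
  pose proof (disk_sum_abs_linear n 1 Hn ltac:(lra)) as HY.
  rewrite sqrt_1_quarter in HX. replace (1 + 1 * 1) with 2 in HY by ring.
  fold N in HX, HY. apply Rabs_le_between in HX, HY.
  assert (Hs2 : 0 <= sqrt 2 <= 3 / 2).
  { pose proof (sqrt_pos 2). pose proof (sqrt_sqrt 2 ltac:(lra)). split; nra. }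
  assert (Hs5 : 0 <= sqrt 5 <= 9 / 4).
  { pose proof (sqrt_pos 5). pose proof (sqrt_sqrt 5 ltac:(lra)). split; nra. }
  unfold avg_orbit_length.
  rewrite disk_sum_orbit_length, length_sum_list, sum_list_disk_points.
  replace (8 / (3 * PI) * (sqrt 2 + 2 * sqrt 5)) with (8 / 3 * (sqrt 2 + 2 * sqrt 5) / PI)
    by (field; apply PI_neq0).
  apply quotient_deviation; [lra | lra | | apply disk_count, Hn | apply disk_count_ge1].
  assert (N * N + (2 * N + 1) * (3 * N + 3) <= 19 * (N * N)) by nra.
  apply Rabs_le. lra.
Qed.
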